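(* For any integer $N>10$ and any integer $m\ge1$, there exists a collection $\mathcal{I}$ of $N$ pairwise disjoint subintervals of $[-\tfrac12,\tfrac12]$, each of length $\frac{N^{-(2m-1)}}{3m}$, such that the Minkowski sums $I_1+\cdots+I_m$ ($I_1,\dots,I_m\in\mathcal{I}$) form a pairwise disjoint collection, i.e. whenever $(I_1,\dots,I_m)$ and $(J_1,\dots,J_m)$ are elements of $\mathcal{I}^m$ that differ as multisets, $(I_1+\cdots+I_m)\cap(J_1+\cdots+J_m)=\emptyset$. *)

From Stdlib Require Import Reals.
From mathcomp Require Import all_boot.
Set Implicit Arguments. Unset Strict Implicit. Unset Printing Implicit Defensive.

Open Scope R_scope.

Definition cinterval (a b : R) : R -> Prop := fun x => a <= x <= b.

Definition ivl (p : R * R) : R -> Prop := cinterval (fst p) (snd p).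

Definition msum (A B : R -> Prop) : R -> Prop :=
  fun x => exists a b, A a /\ B b /\ x = a + b.

Definition msum_seq (s : seq (R -> Prop)) : R -> Prop :=
  foldr msum (fun x => x = 0) s.

Definition disjoint_sets (A B : R -> Prop) : Prop := forall x, ~ (A x /\ B x).

From Stdlib Require Import Reals Lra.
From mathcomp Require Import all_boot zify.
Set Implicit Arguments. Unset Strict Implicit. Unset Printing Implicit Defensive.

(* Choose natural numbers a_0, ..., a_(N-1) <= N^(2m-1) such that sums of
   equally many (at most m) of them determine the multiset of summands.  They
   are built greedily: a new value x is bad only if x * (|v| - |u|) + sum_u a =
   sum_v a for multisets u, v of old indices with |u| < |v| <= m, and such pairs
   (u, v) can be encoded by at most N^m * N^(m-1) words, so some x <= N^(2m-1)
   is good.  The intervals are then placed at -1/2 + a_i * D/2 with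
   D = N^-(2m-1) and length L = D/(3m): a sum of m of them lies in a window of
   width m L = D/3 starting at -m/2 + (sum a_i) * D/2, and windows for different
   values of sum a_i are D/2 apart. *)

Local Open Scope nat_scope.

Definition distinct_msums (m n : nat) (a : nat -> nat) : Prop :=
  forall s t : seq nat, all (fun i => i < n) s -> all (fun i => i < n) t ->
  size s = size t -> size s <= m -> ~~ perm_eq s t ->
  sumn (map a s) <> sumn (map a t).

Definition msum_collision (m n : nat) (a : nat -> nat) (x : nat) : Prop :=
  exists u v : seq nat,
    [/\ all (fun i => i < n) u, all (fun i => i < n) v, size u < size v <= m
      & x * (size v - size u) + sumn (map a u) = sumn (map a v)].

Lemma exists_small_notin_codom (T : finType) (h : T -> nat) (K : nat) :
  #|T| <= K -> exists2 x, x <= K & x \notin codom h.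
Proof.
move=> cardT.
have : ~~ all (mem (codom h)) (iota 0 K.+1).
  apply/negP => /allP iota_sub.
  have := uniq_leq_size (iota_uniq 0 K.+1) iota_sub.
  rewrite size_iota size_codom; lia.
by case/allPn => x; rewrite mem_iota add0n ltnS => x_le x_notin; exists x.
Qed.

(* Sequences with entries < n and size <= k are padded with the letter n to
   words of length k over the alphabet 'I_n.+1. *)
Definition pad (n k : nat) (v : seq nat) : {ffun 'I_k -> 'I_n.+1} :=
  [ffun j : 'I_k => inord (nth n v j)].

Definition unpad (n k : nat) (w : {ffun 'I_k -> 'I_n.+1}) : seq nat :=
  [seq i <- [seq val (w j) | j <- enum 'I_k] | i < n].

Lemma filter_nth_iota (n k : nat) (v : seq nat) :
  all (fun i => i < n) v -> size v <= k ->
  [seq i <- map (nth n v) (iota 0 k) | i < n] = v.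
Proof.
move=> v_lt v_size; rewrite -(subnKC v_size) iotaD map_cat filter_cat.
have -> : [seq i <- map (nth n v) (iota 0 (size v)) | i < n] = v.
  by rewrite -/(mkseq _ _) mkseq_nth; apply/all_filterP.
rewrite add0n (@eq_in_filter _ _ pred0) ?filter_pred0 ?cats0 // => _ /mapP [i i_in ->].
by rewrite nth_default ?ltnn //; rewrite mem_iota in i_in; lia.
Qed.

Lemma padK (n k : nat) (v : seq nat) :
  all (fun i => i < n) v -> size v <= k -> unpad (pad n k v) = v.
Proof.
move=> v_lt v_size; rewrite -[RHS](filter_nth_iota v_lt v_size).
rewrite /unpad -val_enum_ord -map_comp; congr filter; apply: eq_map => j /=.
rewrite ffunE inordK //; case: (ltnP j (size v)) => j_size; last first.
  by rewrite nth_default.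
by apply: ltnW; apply: (allP v_lt); apply: mem_nth.
Qed.

(* |u| < |v| <= m, so u needs only m - 1 letters: hence the exponent 2m - 1. *)
Definition collision_value (m n : nat) (a : nat -> nat)
    (w : {ffun 'I_m -> 'I_n.+1} * {ffun 'I_m.-1 -> 'I_n.+1}) : nat :=
  let v := unpad w.1 in let u := unpad w.2 in
  (sumn (map a v) - sumn (map a u)) %/ (size v - size u).

Lemma msum_collision_codom (m n : nat) (a : nat -> nat) (x : nat) :
  msum_collision m n a x -> x \in codom (@collision_value m n a).
Proof.
case=> u [v [u_lt v_lt /andP [uv_size v_size] collision]].
suff -> : x = collision_value a (pad n m v, pad n m.-1 u) by apply: codom_f.
rewrite /collision_value /= !padK //; last by lia.
by rewrite -collision addnK mulnK //; lia.
Qed.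

Lemma exists_no_msum_collision (m n N : nat) (a : nat -> nat) :
  0 < m -> n < N -> exists2 x, x <= N ^ (2 * m - 1) & ~ msum_collision m n a x.
Proof.
move=> m_gt0 n_lt.
have card_words :
    #|{: {ffun 'I_m -> 'I_n.+1} * {ffun 'I_m.-1 -> 'I_n.+1}}| <= N ^ (2 * m - 1).
  rewrite card_prod !card_ffun !card_ord -expnD.
  have -> : m + m.-1 = 2 * m - 1 by lia.
  by rewrite leq_exp2r //; lia.
have [x x_le x_notin] := exists_small_notin_codom (@collision_value m n a) card_words.
by exists x => // /msum_collision_codom; apply/negP.
Qed.

Lemma perm_nseq_count_filter (T : eqType) (x : T) (s : seq T) :
  perm_eq s (nseq (count_mem x s) x ++ filter (predC1 x) s).
Proof.
have -> : nseq (count_mem x s) x = filter (pred1 x) s.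
  by elim: s => //= y s <-; case: eqP => [<-|].
by rewrite perm_sym perm_filterC.
Qed.

Section Extension.

Variables (m n x : nat) (a : nat -> nat).

Let a' (i : nat) := if i == n then x else a i.

Lemma sumn_split_top (s : seq nat) : all (fun i => i < n.+1) s ->
  let s' := filter (predC1 n) s in
  [/\ sumn (map a' s) = count_mem n s * x + sumn (map a s'),
      size s = count_mem n s + size s', all (fun i => i < n) s'
    & perm_eq s (nseq (count_mem n s) n ++ s')].
Proof.
move=> s_lt s'; rewrite {}/s'; have s_perm := perm_nseq_count_filter n s.
split=> //.
- rewrite (perm_sumn (perm_map a' s_perm)) map_cat sumn_cat map_nseq.
  rewrite {1}/a' eqxx sumn_nseq mulnC; congr (_ + _); congr sumn.
  by apply/eq_in_map => i; rewrite mem_filter /a' => /andP [/negbTE ->].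
- by rewrite (perm_size s_perm) size_cat size_nseq.
- apply/allP => i; rewrite mem_filter => /andP [/= i_ne /(allP s_lt)].
  by rewrite ltnS leq_eqVlt (negbTE i_ne).
Qed.

Lemma msum_collision_of_counts (l l' : nat) (u v : seq nat) :
  all (fun i => i < n) u -> all (fun i => i < n) v -> l' < l ->
  l + size u = l' + size v -> l + size u <= m ->
  l * x + sumn (map a u) = l' * x + sumn (map a v) -> msum_collision m n a x.
Proof.
move=> u_lt v_lt ll' uv_size u_size uv_sum.
exists u, v; split=> //; first by apply/andP; split; lia.
have -> : size v - size u = l - l' by lia.
have := leq_mul (ltnW ll') (leqnn x); rewrite [x * _]mulnC mulnBl; lia.
Qed.

Lemma distinct_msums_extend :
  distinct_msums m n a -> ~ msum_collision m n a x -> distinct_msums m n.+1 a'.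
Proof.
move=> distinct no_collision s t s_lt t_lt st_size s_size st_perm.
have [-> s_split s'_lt s_perm] := sumn_split_top s_lt.
have [-> t_split t'_lt t_perm] := sumn_split_top t_lt.
move: s_split t_split s'_lt t'_lt s_perm t_perm.
set k := count_mem n s; set k' := count_mem n t.
set s' := filter _ s; set t' := filter _ t.
move=> s_split t_split s'_lt t'_lt s_perm t_perm.
rewrite s_split t_split in st_size; rewrite s_split in s_size.
case: (ltngtP k k') => kk'.
- move/esym => st_sum; apply: no_collision.
  apply: (msum_collision_of_counts t'_lt s'_lt kk' (esym st_size) _ st_sum).
  by rewrite -st_size.
- move=> st_sum; apply: no_collision.
  exact: (msum_collision_of_counts s'_lt t'_lt kk' st_size s_size st_sum).
rewrite kk' in st_size s_size * => /addnI; apply: distinct => //.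
- exact: addnI st_size.
- exact: leq_trans (leq_addl _ _) s_size.
apply: contra st_perm => st'_perm; apply: (perm_trans s_perm).
by rewrite perm_sym (perm_trans t_perm) // kk' perm_cat2l perm_sym.
Qed.

End Extension.

Lemma exists_distinct_msums (m N : nat) : 0 < m ->
  exists a, (forall i, a i <= N ^ (2 * m - 1)) /\ distinct_msums m N a.
Proof.
move=> m_gt0; suff: forall n, n <= N ->
    exists a, (forall i, a i <= N ^ (2 * m - 1)) /\ distinct_msums m n a.
  by apply.
elim=> [|n IHn] n_le.
  by exists (fun _ => 0); split=> // [[|? ?]] [|? ?].
have [a [a_le distinct]] := IHn (ltnW n_le).
have [x x_le no_collision] := exists_no_msum_collision a m_gt0 n_le.
exists (fun i => if i == n then x else a i); split.
  by move=> i; case: eqP.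
exact: distinct_msums_extend.
Qed.

Lemma distinct_msums_ord (m N : nat) (a : nat -> nat) (s t : seq 'I_N) :
  distinct_msums m N a -> size s = size t -> size s <= m -> ~~ perm_eq s t ->
  sumn [seq a (val i) | i <- s] <> sumn [seq a (val i) | i <- t].
Proof.
move=> distinct st_size s_size st_perm.
have all_ord (u : seq 'I_N) : all (fun i => i < N) (map val u).
  by apply/allP => _ /mapP [i _ ->]; apply: ltn_ord.
rewrite !(map_comp a val); apply: distinct; rewrite ?size_map //.
by apply: contra st_perm; exact: (perm_map_inj val_inj).
Qed.

Local Open Scope R_scope.

Lemma INR_expn (N k : nat) : INR (N ^ k)%N = INR N ^ k.
Proof. by elim: k => [|k IHk]; rewrite ?expn0 // expnS mult_INR IHk. Qed.

Lemma INR_le_expn_scaled (N k x : nat) :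
  (0 < N)%N -> (x <= N ^ k)%N -> INR x * (/ INR N) ^ k <= 1.
Proof.
move=> N_gt0 x_le; have N_pos : 0 < INR N by apply/lt_0_INR/ltP.
have Nk_pos : 0 < INR N ^ k by apply: pow_lt.
have : INR x <= INR N ^ k by rewrite -INR_expn; apply/le_INR/leP.
rewrite pow_inv => x_le'.
apply: (Rmult_le_reg_r (INR N ^ k)) => //.
by rewrite Rmult_assoc Rinv_l ?Rmult_1_r ?Rmult_1_l //; lra.
Qed.

Lemma disjoint_cinterval_shift (c d e : R) (A B : nat) :
  A <> B -> 0 < d -> e < d ->
  disjoint_sets (cinterval (c + INR A * d) (c + INR A * d + e))
                (cinterval (c + INR B * d) (c + INR B * d + e)).
Proof.
move=> AB d_pos e_lt; wlog AB_lt : A B AB / (A < B)%N => [wlog_lt|].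
  case: (ltngtP A B) => [AB_lt | BA_lt | /eqP //].
  - exact: wlog_lt.
  - by move=> y [yA yB]; apply: (wlog_lt B A _ BA_lt y) => // BA; apply: AB.
have A1B : INR A + 1 <= INR B by rewrite -S_INR; apply/le_INR/leP.
have : (INR A + 1) * d <= INR B * d by apply: Rmult_le_compat_r; lra.
by move=> ? y [[_ ?] [? _]]; lra.
Qed.

Section ShiftedIntervals.

Variables (T : Type) (f : T -> nat) (c d L : R).

Let J (i : T) := ivl (c + INR (f i) * d, c + INR (f i) * d + L).

Lemma msum_seq_shifted_ivl (s : seq T) (y : R) :
  msum_seq (map J s) y ->
  cinterval (INR (size s) * c + INR (sumn (map f s)) * d)
            (INR (size s) * c + INR (sumn (map f s)) * d + INR (size s) * L) y.
Proof.
elim: s y => [|i s IHs] y; first by rewrite /msum_seq /cinterval /= => ->; lra.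
case=> [u [v [[u_ge u_le] [/IHs [v_ge v_le] ->]]]].
rewrite /= in u_ge u_le; rewrite [size _]/= [sumn _]/= S_INR plus_INR; split; lra.
Qed.

Lemma disjoint_msum_shifted_ivl (s t : seq T) :
  0 < d -> INR (size s) * L < d -> size s = size t ->
  sumn (map f s) <> sumn (map f t) ->
  disjoint_sets (msum_seq (map J s)) (msum_seq (map J t)).
Proof.
move=> d_pos L_lt st_size st_sum y [/msum_seq_shifted_ivl ys /msum_seq_shifted_ivl].
rewrite -st_size => yt.
exact: (disjoint_cinterval_shift (c := INR (size s) * c) st_sum d_pos L_lt (conj ys yt)).
Qed.

End ShiftedIntervals.

Theorem lemma3p1 (N m : nat) (hN : (10 < N)%N) (hm : (1 <= m)%N) :
  exists I : 'I_N -> R * R,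
    (forall i : 'I_N,
        -(1/2) <= fst (I i) /\ snd (I i) <= 1/2 /\
        snd (I i) - fst (I i) = (/ INR N) ^ (2 * m - 1)%N / (3 * INR m)) /\
    (forall i j : 'I_N, i <> j -> disjoint_sets (ivl (I i)) (ivl (I j))) /\
    (forall s t : m.-tuple 'I_N, ~~ perm_eq s t ->
        disjoint_sets (msum_seq [seq ivl (I i) | i <- s])
                      (msum_seq [seq ivl (I i) | i <- t])).
Proof.
have [a [a_le distinct]] := exists_distinct_msums N hm.
have N_gt0 : (0 < N)%N by lia.
set D := (/ INR N) ^ (2 * m - 1).
have D_pos : 0 < D by apply/pow_lt/Rinv_0_lt_compat/lt_0_INR/ltP.
have D_le1 : D <= 1.
  by rewrite -[D]Rmult_1_l; apply: (@INR_le_expn_scaled N _ 1 N_gt0); rewrite expn_gt0 N_gt0.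
have aD_le1 i : INR (a i) * D <= 1 := INR_le_expn_scaled N_gt0 (a_le i).
have m_ge1 : 1 <= INR m by apply/(le_INR 1)/leP.
set L := D / (3 * INR m).
have mL : INR m * L = D / 3 by rewrite /L; field; lra.
have L_pos : 0 < L by rewrite /L; apply: Rdiv_lt_0_compat; lra.
exists (fun i : 'I_N => (-(1/2) + INR (a i) * (D / 2), -(1/2) + INR (a i) * (D / 2) + L)).
have L_le : L <= D / 3 by rewrite -mL; nra.
split; [|split].
- move=> i /=; have := aD_le1 i.
  have := Rmult_le_pos _ _ (pos_INR (a i)) (Rlt_le _ _ D_pos).
  split; [lra | split; [lra | ring]].
- move=> i j ij; apply: disjoint_cinterval_shift; [|lra|lra].
  have := @distinct_msums_ord m N a [:: i] [:: j] distinct; rewrite /= !addn0.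
  apply=> //; apply/negP => /perm_mem/(_ i); rewrite !inE eqxx.
  by move/esym/eqP.
- move=> s t st_perm.
  apply: (disjoint_msum_shifted_ivl (f := fun i : 'I_N => a (val i)));
    rewrite ?size_tuple //; [lra | lra |].
  by apply: (distinct_msums_ord distinct); rewrite ?size_tuple.
Qed.
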